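(* A binary network $N$ is orchard if and only if $N$ admits an HGT-consistent labelling.
   Context: A (directed phylogenetic) network on a finite taxa set $X$ is a directed acyclic graph without parallel arcs whose nodes are of the following types: a unique root (indegree 0, outdegree 1); tree nodes (indegree 1, outdegree at least 2); reticulations (indegree at least 2, outdegree 1); leaves (indegree 1, outdegree 0), the leaves being bijectively labelled by $X$. Non-leaf nodes are called internal. A network is binary if every tree node and every reticulation has total degree (indegree plus outdegree) exactly 3. A tree is a network without reticulations. Orchard networks: An ordered pair of leaves $(x,y)$ is a cherry if $x$ and $y$ have a common parent; it is a reticulated cherry if the parent $p_x$ of $x$ is a reticulation and $p_x$ and $y$ have a common parent. Let $p_x,p_y$ be the parents of $x,y$. Reducing $(x,y)$ in a network $N$: if $(x,y)$ is a cherry, delete $x$ and suppress $p_x$ if it now has indegree 1 and outdegree 1; if $(x,y)$ is a reticulated cherry, delete the arc $(p_y,p_x)$ and suppress any resulting node of indegree 1 and outdegree 1; otherwise do nothing. (Suppressing a node $v$ with one parent $u$ and one child $w$ means deleting $v$ and adding the arc $(u,w)$.) For a sequence $S$ of ordered pairs, $NS$ denotes the result of reducing the pairs of $S$ in order. $N$ is orchard if there is a sequence $S$ such that $NS$ is a tree with exactly one leaf. HGT-consistent labelling: Let $N$ be a binary network with node set $V$. An HGT-consistent labelling of $N$ is a map $t:V\to\mathbb{R}$ such that (1) for every arc $(u,v)$, $t(u)\le t(v)$, and equality is allowed only if $v$ is a reticulation; (2) every internal node $u$ has a child $v$ with $t(u)<t(v)$; (3) for every reticulation $r$ with parents $u$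 and $v$, exactly one of $t(u)=t(r)$ and $t(v)=t(r)$ holds. *)

From Stdlib Require Import Reals.
From mathcomp Require Import all_boot.

Set Implicit Arguments.
Unset Strict Implicit.
Unset Printing Implicit Defensive.

(* Networks are
   represented with nodes drawn from a fixed ambient finite type so that the
   cherry reductions (which delete nodes and add arcs between existing nodes)
   stay in the same type.  Leaves are identified with the taxa they carry
   (the labelling is a bijection, so this loses nothing). *)
Record digraph (T : finType) := Digraph { nodes : {set T}; arcs : {set T * T} }.

Section Net.
Variable T : finType.
Implicit Types (N : digraph T) (u v x y : T).

Definition arel N : rel T := fun u v => (u, v) \in arcs N.
Definition indeg N v := #|[set u | (u, v) \in arcs N]|.
Definition outdeg N v := #|[set w | (v, w) \in arcs N]|.

Definition is_root N v := [&& v \in nodes N, indeg N v == 0 & outdeg N v == 1].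
Definition is_tree_node N v := [&& v \in nodes N, indeg N v == 1 & 1 < outdeg N v].
Definition is_retic N v := [&& v \in nodes N, 1 < indeg N v & outdeg N v == 1].
Definition is_leaf N v := [&& v \in nodes N, indeg N v == 1 & outdeg N v == 0].
Definition is_internal N v := (v \in nodes N) && ~~ is_leaf N v.

Definition is_network N : Prop :=
  [/\ (forall u v, (u, v) \in arcs N -> (u \in nodes N) && (v \in nodes N)),
      (forall u v, (u, v) \in arcs N -> ~~ connect (arel N) v u) ,
      #|[set v | is_root N v]| = 1 &
      (forall v, v \in nodes N ->
         [|| is_root N v, is_tree_node N v, is_retic N v | is_leaf N v]) ].

Definition is_binary_network N : Prop :=
  is_network N /\
  (forall v, v \in nodes N ->
     (is_tree_node N v -> outdeg N v = 2) /\ (is_retic N v -> indeg N v = 2)).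

Definition is_tree N : Prop :=
  is_network N /\ (forall v, ~~ is_retic N v).

Definition nb_leaves N := #|[set v | is_leaf N v]|.

(* parent of a node (unique for leaves) *)
Definition parent N v : option T := [pick u | (u, v) \in arcs N].

Definition suppress N v : digraph T :=
  if [&& v \in nodes N, indeg N v == 1 & outdeg N v == 1] then
    match [pick u | (u, v) \in arcs N], [pick w | (v, w) \in arcs N] with
    | Some u, Some w =>
        Digraph (nodes N :\ v)
          ([set a in arcs N | (a.1 != v) && (a.2 != v)] :|: [set (u, w)])
    | _, _ => N
    end
  else N.

Definition delete_node N x : digraph T :=
  Digraph (nodes N :\ x) [set a in arcs N | (a.1 != x) && (a.2 != x)].

Definition delete_arc N (a : T * T) : digraph T :=
  Digraph (nodes N) (arcs N :\ a).

Definition is_cherry N x y : bool :=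
  [&& is_leaf N x, is_leaf N y, x != y &
      [exists p, ((p, x) \in arcs N) && ((p, y) \in arcs N)]].

Definition is_retic_cherry N x y : bool :=
  [&& is_leaf N x, is_leaf N y, x != y &
      [exists px, [&& (px, x) \in arcs N, is_retic N px &
         [exists q, ((q, px) \in arcs N) && ((q, y) \in arcs N)]]]].

Definition reduce N (xy : T * T) : digraph T :=
  let (x, y) := xy in
  match parent N x, parent N y with
  | Some px, Some py =>
      if is_cherry N x y then suppress (delete_node N x) px
      else if is_retic_cherry N x y then
        suppress (suppress (delete_arc N (py, px)) px) py
      else N
  | _, _ => N
  end.

Definition reduce_seq N (S : seq (T * T)) : digraph T := foldl reduce N S.

Definition orchard N : Prop :=
  exists S : seq (T * T), is_tree (reduce_seq N S) /\ nb_leaves (reduce_seq N S) = 1.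

Definition HGT_consistent N (t : T -> R) : Prop :=
  [/\ (forall u v, (u, v) \in arcs N ->
         Rle (t u) (t v) /\ (t u = t v -> is_retic N v)),
      (forall u, is_internal N u ->
         exists v, (u, v) \in arcs N /\ Rlt (t u) (t v)) &
      (forall r u v, is_retic N r -> (u, r) \in arcs N -> (v, r) \in arcs N ->
         u <> v -> (t u = t r <-> t v <> t r)) ].

End Net.

(* Both directions go through the reductions one pair at a time.

   Orchard to HGT: a tree is labelled by the number of ancestors of each
   node.  When a reduction is undone, the labelling of the reduced network is
   kept on the old nodes; the restored parent nodes get a label just above
   the labels of their own parents, and the two leaves get a label above
   that.  For a reticulated cherry the tree node [py] and the reticulation
   [px] below it share their label, which is exactly the HGT condition at
   [px].

   HGT to orchard: let M be the largest label of an internal node.  Every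
   node with a label above M is a leaf.  If some non-root internal node has
   label M, then so does a tree node w (a reticulation has a parent with its
   own label, and that parent is a tree node).  One child y of w has a larger
   label, so it is a leaf; the other child is either a leaf, giving a cherry,
   or an internal node with label M, hence a reticulation whose child is a
   leaf, giving a reticulated cherry whose two middle nodes share a label.
   Reducing it keeps the labelling HGT-consistent and we conclude by
   induction on the number of nodes.  Otherwise only the root has label M,
   and the network is a single arc from the root to a leaf. *)

From Stdlib Require Import Reals Lra Classical.
From mathcomp Require Import all_boot perm.

Set Implicit Arguments.
Unset Strict Implicit.
Unset Printing Implicit Defensive.

Ltac rewrite_neqs := repeat match goal with
  | H : is_true (?a != ?b) |- context [?a == ?b] => rewrite (negbTE H)
  | H : is_true (?a != ?b) |- context [?b == ?a] => rewrite [b == a]eq_sym (negbTE H)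
  end.

Ltac case_atoms := repeat match goal with
  | |- context [(?a, ?b) \in ?A] => case: ((a, b) \in A)
  | |- context [?a == ?b] => case: (a == b)
  end; try done.

Section FinsetFacts.
Variable T : finType.
Implicit Types (A : {set T}) (a b : T).

Lemma card1_set1 A a : #|A| = 1 -> a \in A -> A = [set a].
Proof. by move=> /eqP /cards1P [b ->]; rewrite inE => /eqP ->. Qed.

Lemma card2_set2 A a b : #|A| = 2 -> a \in A -> b \in A -> a != b -> A = [set a; b].
Proof.
move=> cA aA bA ab; apply/eqP; rewrite eq_sym eqEcard cA cards2 ab leqnn andbT.
by apply/subsetP => c; rewrite !inE => /orP [] /eqP ->.
Qed.

Lemma pick_set1 (P : pred T) a : [set u | P u] = [set a] -> [pick u | P u] = Some a.
Proof.
move=> /setP PE; case: pickP => [b Pb|/(_ a)].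
  by have := PE b; rewrite !inE Pb => /esym /eqP ->.
by have := PE a; rewrite !inE eqxx => ->.
Qed.

Lemma card_tperm_imset A a b : #|tperm a b @: A| = #|A|.
Proof. exact/card_imset/perm_inj. Qed.

Lemma mem_tperm_imset A a b w : (w \in tperm a b @: A) = (tperm a b w \in A).
Proof. by rewrite -{1}(tpermK a b w) mem_imset //; apply: perm_inj. Qed.

End FinsetFacts.

Section ArgMax.
Local Open Scope R_scope.
Variables (X : eqType) (f : X -> R).

Lemma exists_max_cons b s : exists2 m, m \in b :: s & {in b :: s, forall y, f y <= f m}.
Proof.
elim: s b => [|c s IH] b; first by exists b => [|y]; rewrite ?inE // => /eqP ->; lra.
have [m ms Hm] := IH c; case: (Rlt_le_dec (f m) (f b)) => fmb.
  exists b; first by rewrite inE eqxx.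
  move=> z; rewrite inE => /orP [/eqP -> | /Hm]; lra.
exists m; first by rewrite inE ms orbT.
by move=> z; rewrite inE => /orP [/eqP -> // | /Hm].
Qed.

End ArgMax.

Lemma exists_max_set (T : finType) (f : T -> R) (A : {set T}) a : a \in A ->
  exists2 m, m \in A & {in A, forall y, Rle (f y) (f m)}.
Proof.
rewrite -mem_enum; case: (enum A) (mem_enum A) => [//|b s] memA _.
have [m ms Hm] := exists_max_cons f b s.
by exists m => [|y yA]; [rewrite -memA | apply: Hm; rewrite memA].
Qed.

Section Networks.
Variable T : finType.
Implicit Types (N : digraph T) (a b u v w x y z : T).

Definition parents N z := [set u | (u, z) \in arcs N].
Definition children N z := [set w | (z, w) \in arcs N].

Lemma in_parents N u z : (u \in parents N z) = ((u, z) \in arcs N).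
Proof. by rewrite inE. Qed.

Lemma in_children N w z : (w \in children N z) = ((z, w) \in arcs N).
Proof. by rewrite inE. Qed.

Lemma indeg_parents N z : indeg N z = #|parents N z|. Proof. by []. Qed.
Lemma outdeg_children N z : outdeg N z = #|children N z|. Proof. by []. Qed.

Lemma parents1E N z a : parents N z = [set a] -> forall u, ((u, z) \in arcs N) = (u == a).
Proof. by move=> Pz u; rewrite -in_parents Pz inE. Qed.

Lemma parents2E N z a b : parents N z = [set a; b] ->
  forall u, ((u, z) \in arcs N) = (u == a) || (u == b).
Proof. by move=> Pz u; rewrite -in_parents Pz !inE. Qed.

Lemma children0E N z : children N z = set0 -> forall w, ((z, w) \in arcs N) = false.
Proof. by move=> Cz w; rewrite -in_children Cz inE. Qed.

Lemma children1E N z a : children N z = [set a] -> forall w, ((z, w) \in arcs N) = (w == a).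
Proof. by move=> Cz w; rewrite -in_children Cz inE. Qed.

Lemma children2E N z a b : children N z = [set a; b] ->
  forall w, ((z, w) \in arcs N) = (w == a) || (w == b).
Proof. by move=> Cz w; rewrite -in_children Cz !inE. Qed.

Lemma parent_parents1 N x p : parents N x = [set p] -> parent N x = Some p.
Proof. by move=> Px; rewrite /parent (pick_set1 Px). Qed.

Lemma leafE N x : is_leaf N x -> [/\ x \in nodes N, #|parents N x| = 1 & children N x = set0].
Proof. by case/and3P => xN /eqP i1 /eqP o0; split => //; apply: cards0_eq. Qed.

Lemma children0_not_retic N r : children N r = set0 -> ~~ is_retic N r.
Proof. by move=> Cr; rewrite /is_retic outdeg_children Cr cards0 !andbF. Qed.

Lemma children2_not_retic N r a b : children N r = [set a; b] -> a != b -> ~~ is_retic N r.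
Proof. by move=> Cr ab; rewrite /is_retic outdeg_children Cr cards2 ab !andbF. Qed.

Lemma suppressE N v u w : v \in nodes N -> parents N v = [set u] -> children N v = [set w] ->
  suppress N v = Digraph (nodes N :\ v)
     ([set a in arcs N | (a.1 != v) && (a.2 != v)] :|: [set (u, w)]).
Proof.
move=> vN Pv Cv; rewrite /suppress vN indeg_parents outdeg_children Pv Cv !cards1.
by rewrite (pick_set1 Pv) (pick_set1 Cv).
Qed.

(* Only the local part of [is_binary_network] is carried through the
   reductions; acyclicity and the unique root are recovered at the end. *)
Definition locally_binary N : Prop :=
  (forall u v, (u, v) \in arcs N -> (u \in nodes N) && (v \in nodes N)) /\
  (forall v, v \in nodes N ->
     [|| (indeg N v == 0) && (outdeg N v == 1),
         (indeg N v == 1) && (outdeg N v == 2),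
         (indeg N v == 2) && (outdeg N v == 1) |
         (indeg N v == 1) && (outdeg N v == 0)]).

Lemma binary_locally_binary N : is_binary_network N -> locally_binary N.
Proof.
case=> [[Harcs _ _ Hkind] Hbin]; split => // v vN; have [out2 in2] := Hbin v vN.
case/or4P: (Hkind v vN) => [/and3P [_ -> ->] //| tv | rv | /and3P [_ -> ->]]; last first.
- by rewrite !orbT.
- by case/and3P: (rv) => _ _ ->; rewrite (in2 rv) !orbT.
- by case/and3P: (tv) => _ ->; rewrite (out2 tv) orbT.
Qed.

Section LocallyBinary.
Variable N : digraph T.
Hypothesis HLB : locally_binary N.

Lemma arc_tail u v : (u, v) \in arcs N -> u \in nodes N.
Proof. by move/HLB.1/andP => []. Qed.

Lemma arc_head u v : (u, v) \in arcs N -> v \in nodes N.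
Proof. by move/HLB.1/andP => []. Qed.

Lemma outdeg_ge2 v : v \in nodes N -> 1 < outdeg N v -> indeg N v = 1 /\ outdeg N v = 2.
Proof. by move/HLB.2; case/or4P => /andP [/eqP -> /eqP ->]. Qed.

Lemma indeg_ge2 v : v \in nodes N -> 1 < indeg N v -> indeg N v = 2 /\ outdeg N v = 1.
Proof. by move/HLB.2; case/or4P => /andP [/eqP -> /eqP ->]. Qed.

Lemma indeg0_root v : v \in nodes N -> indeg N v = 0 -> is_root N v.
Proof. by move=> vN v0; have := HLB.2 _ vN; rewrite /is_root vN v0 /= !orbF. Qed.

End LocallyBinary.

(* The common shape of both reductions: some non-root nodes disappear and
   arcs are rerouted, but every surviving node keeps its degrees, hence its
   kind. *)
Definition preserves_degrees N N' : Prop :=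
  [/\ {subset nodes N' <= nodes N},
      {in nodes N', forall z, indeg N' z = indeg N z /\ outdeg N' z = outdeg N z},
      (forall u v, (u, v) \in arcs N' -> (u \in nodes N') && (v \in nodes N')) &
      {in nodes N, forall z, z \notin nodes N' -> indeg N z != 0}].

Section PreservesDegrees.
Variables N N' : digraph T.
Hypothesis Hpd : preserves_degrees N N'.

Lemma is_leaf_preserved z : z \in nodes N' -> is_leaf N' z = is_leaf N z.
Proof.
by case: Hpd => sub deg _ _ zN'; rewrite /is_leaf zN' (sub _ zN'); case: (deg _ zN') => -> ->.
Qed.

Lemma is_retic_preserved z : z \in nodes N' -> is_retic N' z = is_retic N z.
Proof.
by case: Hpd => sub deg _ _ zN'; rewrite /is_retic zN' (sub _ zN'); case: (deg _ zN') => -> ->.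
Qed.

Lemma is_internal_preserved z : z \in nodes N' -> is_internal N' z = is_internal N z.
Proof.
by case: Hpd => sub _ _ _ zN'; rewrite /is_internal is_leaf_preserved // zN' (sub _ zN').
Qed.

Lemma roots_preserved : [set v | is_root N' v] = [set v | is_root N v].
Proof.
case: Hpd => sub deg _ nonroot; apply/setP => v; rewrite !inE /is_root.
case: (boolP (v \in nodes N')) => vN'; first by rewrite (sub _ vN'); case: (deg _ vN') => -> ->.
by case: (boolP (v \in nodes N)) => //= vN; rewrite (negbTE (nonroot _ vN vN')).
Qed.

Lemma locally_binary_preserved : locally_binary N -> locally_binary N'.
Proof.
case: Hpd => sub deg arcs' _ [_ Hdeg]; split => // v vN'.
by case: (deg _ vN') => -> ->; apply/Hdeg/sub.
Qed.

Lemma nodes_preserved_lt a : a \in nodes N -> a \notin nodes N' -> #|nodes N'| < #|nodes N|.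
Proof.
case: Hpd => sub _ _ _ aN aN'; apply: proper_card; rewrite properE.
apply/andP; split; first by apply/subsetP => z /sub.
by apply/subsetP => /(_ a aN); apply/negP.
Qed.

End PreservesDegrees.

End Networks.

Section Acyclic.
Variable T : finType.
Implicit Types (N : digraph T) (u v w z : T).

Definition acyclic N := forall u v, (u, v) \in arcs N -> ~~ connect (arel N) v u.

Definition ancestors N z := [set w | connect (arel N) w z].

Lemma card_ancestors_lt N u v : acyclic N -> (u, v) \in arcs N ->
  #|ancestors N u| < #|ancestors N v|.
Proof.
move=> Hac a; apply: proper_card; rewrite properE; apply/andP; split.
  by apply/subsetP => w; rewrite !inE => /connect_trans; apply; apply: connect1.
by apply/subsetP => /(_ v); rewrite !inE connect0 => /(_ isT); apply/negP/Hac.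
Qed.

Lemma acyclic_source N (S : {set T}) : acyclic N -> S != set0 ->
  exists2 z, z \in S & forall u, (u, z) \in arcs N -> u \notin S.
Proof.
move=> Hac /set0Pn [z0 z0S].
have [z zS zmin] := arg_minnP (fun z => #|ancestors N z|) z0S.
exists z => // u a; apply/negP => /zmin.
by rewrite leqNgt (card_ancestors_lt Hac a).
Qed.

End Acyclic.

Section HGTLabellings.
Local Open Scope R_scope.
Variables (T : finType) (N : digraph T) (t : T -> R).
Implicit Types (u v w z r : T).
Hypothesis HH : HGT_consistent N t.

Lemma HGT_arc_le u v : (u, v) \in arcs N -> t u <= t v.
Proof. by case: HH => Harc _ _ /Harc []. Qed.

Lemma HGT_arc_lt u v : (u, v) \in arcs N -> ~~ is_retic N v -> t u < t v.
Proof.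
case: HH => Harc _ _ /Harc [le eq_retic] vnr.
by case: (Rle_lt_or_eq_dec _ _ le) => // /eq_retic; rewrite (negbTE vnr).
Qed.

Lemma HGT_retic_child r : is_retic N r -> exists c, children N r = [set c] /\ t r < t c.
Proof.
case: HH => _ Hint _ rr; have /and3P [rN _] := rr; rewrite outdeg_children => /cards1P [c Cr].
have ir : is_internal N r by rewrite /is_internal rN /is_leaf outdeg_children Cr cards1 /= !andbF.
by case: (Hint _ ir) => c' [+ lt]; rewrite (children1E Cr) => /eqP Ec; subst c'; exists c.
Qed.

Lemma HGT_retic_parent r : locally_binary N -> is_retic N r ->
  exists p, (p, r) \in arcs N /\ t p = t r.
Proof.
case: HH => _ _ Hret HLB rr; have /and3P [rN i2 _] := rr.
have /cards2P [p1 [p2 [p12 Pr]]] : #|parents N r| == 2%N.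
  by rewrite -indeg_parents; case: (indeg_ge2 HLB rN i2) => ->.
have a1 : (p1, r) \in arcs N by rewrite (parents2E Pr) eqxx.
have a2 : (p2, r) \in arcs N by rewrite (parents2E Pr) eqxx orbT.
case: (Req_dec (t p1) (t r)) => [|ne1]; first by exists p1.
exists p2; split => //; case: (Req_dec (t p2) (t r)) => // ne2.
by case: (Hret _ _ _ rr a1 a2 (elimN eqP p12)) => _ /(_ ne2).
Qed.

Lemma HGT_parent_eq_tree_node w u : locally_binary N -> (w, u) \in arcs N -> t w = t u ->
  (indeg N w = 1 /\ outdeg N w = 2)%N.
Proof.
case: HH => _ Hint _ HLB a twu; have wN := arc_tail HLB a.
have iw : is_internal N w.
  rewrite /is_internal wN /is_leaf outdeg_children; apply/negP => /and3P [_ _ /eqP/cards0_eq C0].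
  by move: a; rewrite (children0E C0).
case: (Hint _ iw) => v [b lt].
suff : (1 < outdeg N w)%N by case/(outdeg_ge2 HLB wN).
rewrite outdeg_children ltnNge leq_eqVlt ltnS leqn0 cards_eq0; apply/negP => /orP [].
  case/cards1P => c Cw; move: a b; rewrite !(children1E Cw) => /eqP Eu /eqP Ev.
  by subst u v; lra.
by move/eqP => C0; move: a; rewrite (children0E C0).
Qed.

Lemma HGT_path_le a s : path (arel N) a s -> t a <= t (last a s).
Proof.
elim: s a => [|b s IH] a /=; first by move=> _; apply: Rle_refl.
by case/andP => /HGT_arc_le ab /IH; lra.
Qed.

Lemma HGT_acyclic : acyclic N.
Proof.
move=> u v a; apply/negP => /connectP [s ps Eu].
have le_vu : t v <= t u by rewrite Eu; apply: HGT_path_le.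
have tuv : t u = t v by have := HGT_arc_le a; lra.
have vr : is_retic N v by case: HH => Harc _ _; case: (Harc _ _ a) => _ /(_ tuv).
have [c [Cv lt]] := HGT_retic_child vr.
case: s ps Eu => [_ Euv | b s] /=.
  by move: a; rewrite Euv (children1E Cv) => /eqP Ec; rewrite Ec in lt; lra.
case/andP; rewrite /arel (children1E Cv) => /eqP -> pcs Eu.
by have := HGT_path_le pcs; rewrite -Eu; lra.
Qed.

End HGTLabellings.

Section CherryReduction.
Variable T : finType.
Implicit Types (N : digraph T) (u v w x y z : T).

Definition cherry_config N x y p g : Prop :=
  [/\ parents N x = [set p], parents N y = [set p], children N p = [set x; y],
      parents N p = [set g] & [/\ children N x = set0, children N y = set0 & x != y]].

Lemma cherry_configP N x y : locally_binary N -> is_cherry N x y ->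
  exists p g, cherry_config N x y p g.
Proof.
move=> HLB /and4P [lx ly xy /existsP [p /andP [px py]]].
have [xN cx Cx] := leafE lx; have [yN cy Cy] := leafE ly.
have pN : p \in nodes N := arc_tail HLB px.
have Cp : children N p = [set x; y].
  apply: card2_set2 => //; rewrite ?in_children //.
  suff : 1 < outdeg N p by case/(outdeg_ge2 HLB pN).
  have : [set x; y] \subset children N p.
    by apply/subsetP => c; rewrite !inE => /orP [] /eqP ->.
  by move/subset_leq_card; rewrite cards2 xy.
have /cards1P [g Pp] : #|parents N p| == 1.
  rewrite -indeg_parents; case: (outdeg_ge2 HLB pN) => [|-> //].
  by rewrite outdeg_children Cp cards2 xy.
exists p, g; split => //; apply: card1_set1; by rewrite ?in_parents.
Qed.

Variables (N : digraph T) (x y p g : T).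
Hypotheses (HLB : locally_binary N) (Hcherry : is_cherry N x y).
Hypothesis Hconf : cherry_config N x y p g.
Local Notation N' := (reduce N (x, y)).

Let parents_x : parents N x = [set p]. Proof. by case: Hconf. Qed.
Let parents_y : parents N y = [set p]. Proof. by case: Hconf. Qed.
Let children_p : children N p = [set x; y]. Proof. by case: Hconf. Qed.
Let parents_p : parents N p = [set g]. Proof. by case: Hconf. Qed.
Let children_x : children N x = set0. Proof. by case: Hconf => _ _ _ _ []. Qed.
Let children_y : children N y = set0. Proof. by case: Hconf => _ _ _ _ []. Qed.
Let neq_xy : x != y. Proof. by case: Hconf => _ _ _ _ []. Qed.

Let arc_gp : (g, p) \in arcs N. Proof. by rewrite (parents1E parents_p). Qed.
Let arc_px : (p, x) \in arcs N. Proof. by rewrite (parents1E parents_x). Qed.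
Let arc_py : (p, y) \in arcs N. Proof. by rewrite (parents1E parents_y). Qed.

Let neq_px : p != x.
Proof. by apply/eqP => E; move: arc_px; rewrite {1}E (children0E children_x). Qed.
Let neq_py : p != y.
Proof. by apply/eqP => E; move: arc_py; rewrite {1}E (children0E children_y). Qed.
Let neq_gp : g != p.
Proof.
apply/eqP => E; move: arc_gp.
by rewrite {1}E (children2E children_p) (negbTE neq_px) (negbTE neq_py).
Qed.
Let neq_gx : g != x.
Proof. by apply/eqP => E; move: arc_gp; rewrite E (children0E children_x). Qed.
Let neq_gy : g != y.
Proof. by apply/eqP => E; move: arc_gp; rewrite E (children0E children_y). Qed.

Lemma reduce_cherryE : N' = Digraph (nodes N :\ x :\ p)
  ([set a in [set a in arcs N | (a.1 != x) && (a.2 != x)] | (a.1 != p) && (a.2 != p)]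
     :|: [set (g, y)]).
Proof.
rewrite /reduce (parent_parents1 parents_x) (parent_parents1 parents_y) Hcherry.
apply: suppressE.
- by rewrite /= !inE neq_px (arc_tail HLB arc_px).
- apply/setP => u; rewrite !inE /= (parents1E parents_p).
  by case: (u =P g) => [->|] //=; rewrite neq_gx neq_px.
- apply/setP => w; rewrite !inE /= (children2E children_p) neq_px /=.
  by case: (w =P x) => [->|] //=; rewrite ?andbT // (negbTE neq_xy).
Qed.

Lemma nodes_reduce_cherry z : (z \in nodes N') = [&& z \in nodes N, z != x & z != p].
Proof.
by rewrite reduce_cherryE /= !inE; case: (z \in nodes N); case: (z != x); case: (z != p).
Qed.

Lemma arcs_reduce_cherry u v : ((u, v) \in arcs N') =
  [&& (u, v) \in arcs N, u != x, v != x, u != p & v != p] || ((u == g) && (v == y)).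
Proof. by rewrite reduce_cherryE /= !inE /= xpair_eqE -!andbA. Qed.

Lemma parents_reduce_cherry z : z \in nodes N' ->
  parents N' z = if z == y then [set g] else parents N z.
Proof.
rewrite nodes_reduce_cherry => /and3P [_ zx zp]; apply/setP => u.
rewrite in_parents arcs_reduce_cherry; case: (z =P y) => [->|/eqP zy].
  rewrite inE (parents1E parents_y); rewrite_neqs.
  by case: (u =P p) => [->|]; rewrite_neqs; case_atoms.
rewrite in_parents zx zp andbF orbF andbT.
case: (u =P x) => [->|/eqP ux]; first by rewrite (children0E children_x).
case: (u =P p) => [->|/eqP up]; first by rewrite (children2E children_p); rewrite_neqs.
by rewrite /= !andbT.
Qed.

(* The arc [g -> p] becomes [g -> y]. *)
Lemma children_reduce_cherry z : z \in nodes N' -> children N' z = tperm p y @: children N z.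
Proof.
rewrite nodes_reduce_cherry => /and3P [_ zx zp]; apply/setP => w.
rewrite mem_tperm_imset !in_children arcs_reduce_cherry zx zp /=.
case: tpermP => [->|->|/eqP wp /eqP wy].
- by rewrite (parents1E parents_y) eqxx; rewrite_neqs; rewrite !andbF.
- by rewrite (parents1E parents_y) (parents1E parents_p) eqxx; rewrite_neqs; rewrite andbT.
- case: (w =P x) => [->|/eqP wx].
    by rewrite (parents1E parents_x); rewrite_neqs; rewrite /= !andbF.
  by rewrite_neqs; rewrite /= !andbT andbF orbF.
Qed.

Lemma preserves_degrees_cherry : preserves_degrees N N'.
Proof.
split.
- by move=> z; rewrite nodes_reduce_cherry => /and3P [].
- move=> z zN'; rewrite !indeg_parents !outdeg_children parents_reduce_cherry //.
  rewrite children_reduce_cherry // card_tperm_imset; split => //.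
  by case: (z =P y) => [->|//]; rewrite parents_y !cards1.
- move=> u v; rewrite arcs_reduce_cherry !nodes_reduce_cherry => /orP [].
    by case/and5P => a -> -> -> ->; rewrite (arc_tail HLB a) (arc_head HLB a).
  case/andP => /eqP -> /eqP ->; rewrite (arc_tail HLB arc_gp) (arc_head HLB arc_py).
  by rewrite neq_gx neq_gp eq_sym (negbTE neq_xy) eq_sym neq_py.
- move=> z zN; rewrite nodes_reduce_cherry zN /= negb_and !negbK.
  by case/orP => /eqP ->; rewrite indeg_parents ?parents_x ?parents_p cards1.
Qed.


Let leaf_x : is_leaf N x. Proof. by case/and4P: Hcherry. Qed.
Let leaf_y : is_leaf N y. Proof. by case/and4P: Hcherry. Qed.

Local Open Scope R_scope.

Lemma HGT_reduce_cherry t : HGT_consistent N t -> HGT_consistent N' t.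
Proof.
move=> HH; have [Harc Hint Hret] := HH; have Hpd := preserves_degrees_cherry.
have tgp : t g < t p := HGT_arc_lt HH arc_gp (children2_not_retic children_p neq_xy).
have tpy : t p < t y := HGT_arc_lt HH arc_py (children0_not_retic children_y).
split.
- move=> u v; rewrite arcs_reduce_cherry => /orP [].
    case/and5P => a _ vx _ vp; case: (Harc _ _ a) => le eq_retic; split => // /eq_retic.
    by rewrite -(is_retic_preserved Hpd) // nodes_reduce_cherry vx vp (arc_head HLB a).
  by case/andP => /eqP -> /eqP ->; split => [|E]; lra.
- move=> u iu'; have uN' : u \in nodes N' by case/andP: iu'.
  rewrite (is_internal_preserved Hpd uN') in iu'.
  move: uN'; rewrite nodes_reduce_cherry => /and3P [_ ux up].
  case: (Hint _ iu') => v [a lt].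
  case: (v =P p) => [Ev|/eqP vp].
    subst v; move: a; rewrite (parents1E parents_p) => /eqP Eu; subst u.
    by exists y; rewrite arcs_reduce_cherry !eqxx orbT; split => //; lra.
  case: (v =P x) => [Ev|/eqP vx].
    by subst v; move: a; rewrite (parents1E parents_x) (negbTE up).
  by exists v; rewrite arcs_reduce_cherry a ux vx up vp.
- move=> r u v rr' ar br uv; have rN' : r \in nodes N' by case/and3P: rr'.
  rewrite (is_retic_preserved Hpd rN') in rr'.
  have ry : r != y.
    by apply/eqP => E; move: rr'; rewrite E (negbTE (children0_not_retic children_y)).
  have arc_to_r w : (w, r) \in arcs N' -> (w, r) \in arcs N.
    by rewrite arcs_reduce_cherry (negbTE ry) andbF orbF => /and5P [].
  exact: Hret rr' (arc_to_r _ ar) (arc_to_r _ br) uv.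
Qed.

Lemma HGT_lift_cherry t' : HGT_consistent N' t' -> exists t, HGT_consistent N t.
Proof.
case=> Harc' Hint' Hret'; have Hpd := preserves_degrees_cherry.
pose t z := if z == p then t' g + 1 else if (z == x) || (z == y) then t' g + 2 else t' z.
have tp : t p = t' g + 1 by rewrite /t eqxx.
have tx : t x = t' g + 2 by rewrite /t eqxx orTb; rewrite_neqs.
have ty : t y = t' g + 2 by rewrite /t eqxx orbT; rewrite_neqs.
have t_other z : z != p -> z != x -> z != y -> t z = t' z by move=> *; rewrite /t; rewrite_neqs.
have tg : t g = t' g := t_other g neq_gp neq_gx neq_gy.
have no_arc_from_leaves u v : (u, v) \in arcs N -> u != x /\ u != y.
  move=> a; split; apply/eqP => E; move: a.
    by rewrite E (children0E children_x).
  by rewrite E (children0E children_y).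
exists t; split.
- move=> u v a.
  case: (v =P x) => [Ev|/eqP vx].
    subst v; move: a; rewrite (parents1E parents_x) => /eqP ->.
    by rewrite tp tx; split => [|E]; lra.
  case: (v =P y) => [Ev|/eqP vy].
    subst v; move: a; rewrite (parents1E parents_y) => /eqP ->.
    by rewrite tp ty; split => [|E]; lra.
  case: (v =P p) => [Ev|/eqP vp].
    subst v; move: a; rewrite (parents1E parents_p) => /eqP ->.
    by rewrite tp tg; split => [|E]; lra.
  have [ux uy] := no_arc_from_leaves _ _ a.
  have up : u != p by apply/eqP => E; move: a; rewrite E (children2E children_p); rewrite_neqs.
  have a' : (u, v) \in arcs N' by rewrite arcs_reduce_cherry a ux vx up vp.
  have vN' : v \in nodes N' by rewrite nodes_reduce_cherry (arc_head HLB a) vx vp.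
  rewrite !t_other //; case: (Harc' _ _ a') => le eq_retic; split => // /eq_retic.
  by rewrite (is_retic_preserved Hpd vN').
- move=> u iu; have /andP [uN nlu] := iu.
  have ux : u != x by apply/eqP => E; move: nlu; rewrite E leaf_x.
  have uy : u != y by apply/eqP => E; move: nlu; rewrite E leaf_y.
  case: (u =P p) => [->|/eqP up]; first by exists y; rewrite tp ty; split => //; lra.
  case: (u =P g) => [->|/eqP ug]; first by exists p; rewrite tp tg; split => //; lra.
  have uN' : u \in nodes N' by rewrite nodes_reduce_cherry uN ux up.
  have iu' : is_internal N' u by rewrite (is_internal_preserved Hpd uN').
  case: (Hint' _ iu') => v [+ lt]; rewrite arcs_reduce_cherry (negbTE ug) orbF.
  case/and5P => a _ vx _ vp.
  have vy : v != y by apply/eqP => E; move: a; rewrite E (parents1E parents_y) (negbTE up).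
  by exists v; rewrite !t_other.
- move=> r u v rr ar br uv.
  have rx : r != x by apply/eqP => E; move: rr; rewrite E (negbTE (children0_not_retic children_x)).
  have ry : r != y by apply/eqP => E; move: rr; rewrite E (negbTE (children0_not_retic children_y)).
  have rp : r != p.
    by apply/eqP => E; move: rr; rewrite E (negbTE (children2_not_retic children_p neq_xy)).
  have rN' : r \in nodes N' by rewrite nodes_reduce_cherry rx rp !andbT; case/and3P: rr.
  have lift_arc w : (w, r) \in arcs N -> (w, r) \in arcs N' /\ t w = t' w.
    move=> a; have [wx wy] := no_arc_from_leaves _ _ a.
    have wp : w != p by apply/eqP => E; move: a; rewrite E (children2E children_p); rewrite_neqs.
    by rewrite arcs_reduce_cherry a wx rx wp rp t_other.
  have [ar' ->] := lift_arc _ ar; have [br' ->] := lift_arc _ br.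
  by rewrite t_other //; apply: Hret' ar' br' uv; rewrite (is_retic_preserved Hpd rN').
Qed.

End CherryReduction.

Section ReticulatedCherryReduction.
Variable T : finType.
Implicit Types (N : digraph T) (u v w x y z : T).

Definition retic_cherry_config N x y px py q g : Prop :=
  [/\ [/\ parents N x = [set px], parents N y = [set py], children N px = [set x]
        & children N py = [set px; y]],
      parents N px = [set py; q], parents N py = [set g], q != py &
      [/\ children N x = set0, children N y = set0 & x != y]].

Lemma retic_cherry_configP N x y : locally_binary N -> is_retic_cherry N x y ->
  exists px py q g, retic_cherry_config N x y px py q g.
Proof.
move=> HLB /and4P [lx ly xy /existsP [px /and3P [pxx rpx /existsP [py /andP [pypx pyy]]]]].
have [xN cx Cx] := leafE lx; have [yN cy Cy] := leafE ly.
case/and3P: rpx => pxN ipx /eqP opx.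
have Cpx : children N px = [set x] by apply: card1_set1; rewrite ?in_children.
have [q [qpy Ppx]] : exists q, q != py /\ parents N px = [set py; q].
  have /cards2P [a [b [ab Pab]]] : #|parents N px| == 2.
    by rewrite -indeg_parents; case: (indeg_ge2 HLB pxN ipx) => ->.
  have : py \in [set a; b] by rewrite -Pab in_parents.
  rewrite Pab !inE => /orP [] /eqP ->; first by exists b; rewrite eq_sym.
  by exists a; rewrite setUC.
have pyN : py \in nodes N := arc_tail HLB pyy.
have pxy : px != y by apply/eqP => E; move: pxx; rewrite E (children0E Cy).
have Cpy : children N py = [set px; y].
  apply: card2_set2 => //; rewrite ?in_children //.
  suff : 1 < outdeg N py by case/(outdeg_ge2 HLB pyN).
  have : [set px; y] \subset children N py.
    by apply/subsetP => c; rewrite !inE => /orP [] /eqP ->.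
  by move/subset_leq_card; rewrite cards2 pxy.
have /cards1P [g Ppy] : #|parents N py| == 1.
  rewrite -indeg_parents; case: (outdeg_ge2 HLB pyN) => [|-> //].
  by rewrite outdeg_children Cpy cards2 pxy.
exists px, py, q, g; split => //; split => //; apply: card1_set1; by rewrite ?in_parents.
Qed.

Variables (N : digraph T) (x y px py q g : T).
Hypotheses (HLB : locally_binary N) (Hretic : is_retic_cherry N x y).
Hypothesis Hconf : retic_cherry_config N x y px py q g.
Local Notation N' := (reduce N (x, y)).

Let parents_x : parents N x = [set px]. Proof. by case: Hconf => [[]]. Qed.
Let parents_y : parents N y = [set py]. Proof. by case: Hconf => [[]]. Qed.
Let children_px : children N px = [set x]. Proof. by case: Hconf => [[]]. Qed.
Let children_py : children N py = [set px; y]. Proof. by case: Hconf => [[]]. Qed.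
Let parents_px : parents N px = [set py; q]. Proof. by case: Hconf. Qed.
Let parents_py : parents N py = [set g]. Proof. by case: Hconf. Qed.
Let neq_qpy : q != py. Proof. by case: Hconf. Qed.
Let children_x : children N x = set0. Proof. by case: Hconf => _ _ _ _ []. Qed.
Let children_y : children N y = set0. Proof. by case: Hconf => _ _ _ _ []. Qed.
Let neq_xy : x != y. Proof. by case: Hconf => _ _ _ _ []. Qed.

Let arc_pxx : (px, x) \in arcs N. Proof. by rewrite (parents1E parents_x). Qed.
Let arc_pyy : (py, y) \in arcs N. Proof. by rewrite (parents1E parents_y). Qed.
Let arc_pypx : (py, px) \in arcs N. Proof. by rewrite (parents2E parents_px) eqxx. Qed.
Let arc_qpx : (q, px) \in arcs N. Proof. by rewrite (parents2E parents_px) eqxx orbT. Qed.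
Let arc_gpy : (g, py) \in arcs N. Proof. by rewrite (parents1E parents_py). Qed.

Let neq_pxx : px != x.
Proof. by apply/eqP => E; move: arc_pxx; rewrite {1}E (children0E children_x). Qed.
Let neq_pxy : px != y.
Proof. by apply/eqP => E; move: arc_pxx; rewrite E (children0E children_y). Qed.
Let neq_pyx : py != x.
Proof. by apply/eqP => E; move: arc_pyy; rewrite E (children0E children_x). Qed.
Let neq_pyy : py != y.
Proof. by apply/eqP => E; move: arc_pyy; rewrite {1}E (children0E children_y). Qed.
Let neq_pxpy : px != py.
Proof.
by apply/eqP => E; move: arc_pyy; rewrite -E (children1E children_px) eq_sym (negbTE neq_xy).
Qed.
Let neq_qpx : q != px.
Proof.
by apply/eqP => E; move: arc_qpx; rewrite {1}E (children1E children_px) (negbTE neq_pxx).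
Qed.
Let neq_qx : q != x.
Proof. by apply/eqP => E; move: arc_qpx; rewrite E (children0E children_x). Qed.
Let neq_qy : q != y.
Proof. by apply/eqP => E; move: arc_qpx; rewrite E (children0E children_y). Qed.
Let neq_gpy : g != py.
Proof.
apply/eqP => E; move: arc_gpy.
by rewrite {1}E (children2E children_py) eq_sym (negbTE neq_pxpy) (negbTE neq_pyy).
Qed.
Let neq_gpx : g != px.
Proof. by apply/eqP => E; move: arc_gpy; rewrite E (children1E children_px) (negbTE neq_pyx). Qed.
Let neq_gx : g != x.
Proof. by apply/eqP => E; move: arc_gpy; rewrite E (children0E children_x). Qed.
Let neq_gy : g != y.
Proof. by apply/eqP => E; move: arc_gpy; rewrite E (children0E children_y). Qed.

Lemma reduce_retic_cherryE : N' = suppress (suppress (delete_arc N (py, px)) px) py.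
Proof.
have not_cherry : is_cherry N x y = false.
  apply/negbTE/negP => /and4P [_ _ _ /existsP [p /andP]].
  rewrite (parents1E parents_x) (parents1E parents_y) => -[/eqP -> /eqP E].
  by move: neq_pxpy; rewrite E eqxx.
by rewrite /reduce (parent_parents1 parents_x) (parent_parents1 parents_y) not_cherry Hretic.
Qed.

Let reduce_retic_cherry_digraph : N' = Digraph (nodes N :\ px :\ py)
  ([set a in [set a in arcs N :\ (py, px) | (a.1 != px) && (a.2 != px)] :|: [set (q, x)]
      | (a.1 != py) && (a.2 != py)] :|: [set (g, y)]).
Proof.
have pxN : px \in nodes N := arc_head HLB arc_pypx.
rewrite reduce_retic_cherryE.
have -> : suppress (delete_arc N (py, px)) px = Digraph (nodes N :\ px)
    ([set a in arcs N :\ (py, px) | (a.1 != px) && (a.2 != px)] :|: [set (q, x)]).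
  apply: suppressE => //.
  - apply/setP => u; rewrite !inE /= xpair_eqE (parents2E parents_px).
    by case: (u =P py) => [->|] //=; rewrite eqxx eq_sym (negbTE neq_qpy).
  - by apply/setP => w; rewrite !inE /= xpair_eqE (children1E children_px) (negbTE neq_pxpy).
apply: suppressE.
- by rewrite !inE (arc_tail HLB arc_pyy); rewrite_neqs.
- apply/setP => u; rewrite !inE /= !xpair_eqE (parents1E parents_py).
  by case: (u =P g) => [->|/eqP nu]; rewrite ?eqxx; rewrite_neqs; case_atoms.
- apply/setP => w; rewrite !inE /= !xpair_eqE (children2E children_py).
  by case: (w =P y) => [->|/eqP nw]; rewrite ?eqxx; rewrite_neqs; case_atoms.
Qed.

Lemma nodes_reduce_retic_cherry z :
  (z \in nodes N') = [&& z \in nodes N, z != px & z != py].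
Proof.
rewrite reduce_retic_cherry_digraph /= !inE.
by case: (z \in nodes N); case: (z != px); case: (z != py).
Qed.

Lemma arcs_reduce_retic_cherry u v : ((u, v) \in arcs N') =
  [|| [&& (u, v) \in arcs N, u != px, u != py, v != px & v != py],
      (u == q) && (v == x) | (u == g) && (v == y)].
Proof.
rewrite reduce_retic_cherry_digraph !inE /= !xpair_eqE.
case: (u =P py) => [->|/eqP nu]; try (case: (u =P px) => [->|/eqP nu']);
case: (v =P py) => [->|/eqP nv]; try (case: (v =P px) => [->|/eqP nv']);
rewrite ?eqxx; rewrite_neqs; case_atoms.
Qed.

Lemma parents_reduce_retic_cherry z : z \in nodes N' ->
  parents N' z = if z == x then [set q] else if z == y then [set g] else parents N z.
Proof.
rewrite nodes_reduce_retic_cherry => /and3P [_ zpx zpy]; apply/setP => u.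
rewrite in_parents arcs_reduce_retic_cherry.
case: (z =P x) => [->|/eqP zx].
  rewrite inE (parents1E parents_x); rewrite_neqs.
  by case: (u =P px) => [->|]; rewrite_neqs; case_atoms.
case: (z =P y) => [->|/eqP zy].
  rewrite inE (parents1E parents_y); rewrite_neqs.
  by case: (u =P py) => [->|]; rewrite_neqs; case_atoms.
rewrite in_parents; rewrite_neqs.
case: (u =P px) => [->|/eqP upx]; first by rewrite (children1E children_px); rewrite_neqs.
case: (u =P py) => [->|/eqP upy]; first by rewrite (children2E children_py); rewrite_neqs.
by rewrite_neqs; case_atoms.
Qed.

Let tperm_pyy_x : tperm py y x = x. Proof. by rewrite tpermD // eq_sym. Qed.
Let tperm_pyy_px : tperm py y px = px. Proof. by rewrite tpermD // eq_sym. Qed.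

Lemma children_reduce_retic_cherry z : z \in nodes N' ->
  children N' z = tperm px x @: (tperm py y @: children N z).
Proof.
rewrite nodes_reduce_retic_cherry => /and3P [_ zpx zpy]; apply/setP => w.
rewrite !mem_tperm_imset !in_children arcs_reduce_retic_cherry.
case: (tpermP px x w) => [->|->|/eqP wpx /eqP wx].
- by rewrite tperm_pyy_x (parents1E parents_x) eqxx; rewrite_neqs; case_atoms.
- rewrite tperm_pyy_px (parents2E parents_px) (parents1E parents_x) eqxx.
  by rewrite_neqs; case_atoms.
case: (tpermP py y w) => [->|->|/eqP wpy /eqP wy].
- by rewrite (parents1E parents_y) (parents1E parents_py) eqxx; rewrite_neqs; case_atoms.
- by rewrite (parents1E parents_y) (parents1E parents_py) eqxx; rewrite_neqs; case_atoms.
- by rewrite_neqs; case_atoms.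
Qed.

Lemma preserves_degrees_retic_cherry : preserves_degrees N N'.
Proof.
split.
- by move=> z; rewrite nodes_reduce_retic_cherry => /and3P [].
- move=> z zN'; rewrite !indeg_parents !outdeg_children parents_reduce_retic_cherry //.
  rewrite children_reduce_retic_cherry // !card_tperm_imset; split => //.
  case: (z =P x) => [->|_]; first by rewrite parents_x !cards1.
  by case: (z =P y) => [->|//]; rewrite parents_y !cards1.
- move=> u v; rewrite arcs_reduce_retic_cherry !nodes_reduce_retic_cherry => /or3P [].
  + by case/and5P => a -> -> -> ->; rewrite (arc_tail HLB a) (arc_head HLB a).
  + case/andP => /eqP -> /eqP ->; rewrite (arc_tail HLB arc_qpx) (arc_head HLB arc_pxx).
    by rewrite_neqs.
  + case/andP => /eqP -> /eqP ->; rewrite (arc_tail HLB arc_gpy) (arc_head HLB arc_pyy).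
    by rewrite_neqs.
- move=> z zN; rewrite nodes_reduce_retic_cherry zN /= negb_and !negbK.
  case/orP => /eqP ->; rewrite indeg_parents ?parents_px ?parents_py ?cards1 //.
  by rewrite cards2; case: (py != q).
Qed.


Let leaf_x : is_leaf N x. Proof. by case/and4P: Hretic. Qed.
Let leaf_y : is_leaf N y. Proof. by case/and4P: Hretic. Qed.
Let retic_px : is_retic N px.
Proof.
rewrite /is_retic (arc_head HLB arc_pypx) indeg_parents outdeg_children.
by rewrite parents_px children_px cards1 cards2; rewrite_neqs.
Qed.

Local Open Scope R_scope.

Lemma HGT_reduce_retic_cherry t : HGT_consistent N t -> t py = t px -> HGT_consistent N' t.
Proof.
move=> HH tpypx; have [Harc Hint Hret] := HH; have Hpd := preserves_degrees_retic_cherry.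
have tqpx : t q < t px.
  have py_q : py <> q by move=> E; move: neq_qpy; rewrite E eqxx.
  case: (Hret _ _ _ retic_px arc_pypx arc_qpx py_q) => /(_ tpypx) tq_ne _.
  by case: (Rle_lt_or_eq_dec _ _ (HGT_arc_le HH arc_qpx)).
have tpxx : t px < t x := HGT_arc_lt HH arc_pxx (children0_not_retic children_x).
have tgpy : t g < t py := HGT_arc_lt HH arc_gpy (children2_not_retic children_py neq_pxy).
have tpyy : t py < t y := HGT_arc_lt HH arc_pyy (children0_not_retic children_y).
split.
- move=> u v; rewrite arcs_reduce_retic_cherry => /or3P [].
  + case/and5P => a _ _ vpx vpy; case: (Harc _ _ a) => le eq_retic; split => // /eq_retic.
    by rewrite -(is_retic_preserved Hpd) // nodes_reduce_retic_cherry vpx vpy (arc_head HLB a).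
  + by case/andP => /eqP -> /eqP ->; split => [|E]; lra.
  + by case/andP => /eqP -> /eqP ->; split => [|E]; lra.
- move=> u iu'; have uN' : u \in nodes N' by case/andP: iu'.
  rewrite (is_internal_preserved Hpd uN') in iu'.
  move: uN'; rewrite nodes_reduce_retic_cherry => /and3P [_ upx upy].
  case: (Hint _ iu') => v [a lt].
  case: (v =P px) => [Ev|/eqP vpx].
    subst v; move: a; rewrite (parents2E parents_px) (negbTE upy) => /eqP Eu; subst u.
    by exists x; rewrite arcs_reduce_retic_cherry !eqxx orbT; split => //; lra.
  case: (v =P py) => [Ev|/eqP vpy].
    subst v; move: a; rewrite (parents1E parents_py) => /eqP Eu; subst u.
    by exists y; rewrite arcs_reduce_retic_cherry !eqxx !orbT; split => //; lra.
  by exists v; rewrite arcs_reduce_retic_cherry a upx upy vpx vpy.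
- move=> r u v rr' ar br uv; have rN' : r \in nodes N' by case/and3P: rr'.
  rewrite (is_retic_preserved Hpd rN') in rr'.
  have rx : r != x.
    by apply/eqP => E; move: rr'; rewrite E (negbTE (children0_not_retic children_x)).
  have ry : r != y.
    by apply/eqP => E; move: rr'; rewrite E (negbTE (children0_not_retic children_y)).
  have arc_to_r w : (w, r) \in arcs N' -> (w, r) \in arcs N.
    by rewrite arcs_reduce_retic_cherry (negbTE rx) (negbTE ry) !andbF !orbF => /and5P [].
  exact: Hret rr' (arc_to_r _ ar) (arc_to_r _ br) uv.
Qed.

Lemma HGT_lift_retic_cherry t' : HGT_consistent N' t' -> exists t, HGT_consistent N t.
Proof.
case=> Harc' Hint' Hret'; have Hpd := preserves_degrees_retic_cherry.
pose m := Rmax (t' g) (t' q).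
have mg : t' g <= m := Rmax_l _ _.
have mq : t' q <= m := Rmax_r _ _.
pose t z := if (z == px) || (z == py) then m + 1
            else if (z == x) || (z == y) then m + 2 else t' z.
have tpx : t px = m + 1 by rewrite /t eqxx.
have tpy : t py = m + 1 by rewrite /t eqxx orbT.
have tx : t x = m + 2 by rewrite /t eqxx orTb; rewrite_neqs.
have ty : t y = m + 2 by rewrite /t eqxx orbT; rewrite_neqs.
have t_other z : z != px -> z != py -> z != x -> z != y -> t z = t' z.
  by move=> *; rewrite /t; rewrite_neqs.
have tg : t g = t' g := t_other g neq_gpx neq_gpy neq_gx neq_gy.
have tq : t q = t' q := t_other q neq_qpx neq_qpy neq_qx neq_qy.
have no_arc_from u v : (u, v) \in arcs N -> v != px -> v != py -> v != x -> v != y ->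
    [/\ u != px, u != py, u != x & u != y].
  move=> a vpx vpy vx vy; split; apply/eqP => E; move: a; rewrite E.
  - by rewrite (children1E children_px); rewrite_neqs.
  - by rewrite (children2E children_py); rewrite_neqs.
  - by rewrite (children0E children_x).
  - by rewrite (children0E children_y).
exists t; split.
- move=> u v a.
  case: (v =P x) => [Ev|/eqP vx].
    subst v; move: a; rewrite (parents1E parents_x) => /eqP ->.
    by rewrite tpx tx; split => [|E]; lra.
  case: (v =P y) => [Ev|/eqP vy].
    subst v; move: a; rewrite (parents1E parents_y) => /eqP ->.
    by rewrite tpy ty; split => [|E]; lra.
  case: (v =P px) => [Ev|/eqP vpx].
    subst v; move: a; rewrite (parents2E parents_px) => /orP [] /eqP ->.
      by rewrite tpy tpx; split => //; lra.
    by rewrite tq tpx; split => [|E]; lra.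
  case: (v =P py) => [Ev|/eqP vpy].
    subst v; move: a; rewrite (parents1E parents_py) => /eqP ->.
    by rewrite tpy tg; split => [|E]; lra.
  have [upx upy ux uy] := no_arc_from _ _ a vpx vpy vx vy.
  have a' : (u, v) \in arcs N' by rewrite arcs_reduce_retic_cherry a upx upy vpx vpy.
  have vN' : v \in nodes N' by rewrite nodes_reduce_retic_cherry (arc_head HLB a) vpx vpy.
  rewrite !t_other //; case: (Harc' _ _ a') => le eq_retic; split => // /eq_retic.
  by rewrite (is_retic_preserved Hpd vN').
- move=> u iu; have /andP [uN nlu] := iu.
  have ux : u != x by apply/eqP => E; move: nlu; rewrite E leaf_x.
  have uy : u != y by apply/eqP => E; move: nlu; rewrite E leaf_y.
  case: (u =P px) => [->|/eqP upx]; first by exists x; rewrite tpx tx; split => //; lra.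
  case: (u =P py) => [->|/eqP upy]; first by exists y; rewrite tpy ty; split => //; lra.
  case: (u =P g) => [->|/eqP ug]; first by exists py; rewrite tpy tg; split => //; lra.
  case: (u =P q) => [->|/eqP uq]; first by exists px; rewrite tpx tq; split => //; lra.
  have uN' : u \in nodes N' by rewrite nodes_reduce_retic_cherry uN upx upy.
  have iu' : is_internal N' u by rewrite (is_internal_preserved Hpd uN').
  case: (Hint' _ iu') => v [+ lt]; rewrite arcs_reduce_retic_cherry (negbTE ug) (negbTE uq) !orbF.
  case/and5P => a _ _ vpx vpy.
  have vx : v != x by apply/eqP => E; move: a; rewrite E (parents1E parents_x) (negbTE upx).
  have vy : v != y by apply/eqP => E; move: a; rewrite E (parents1E parents_y) (negbTE upy).
  by exists v; rewrite !t_other.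
- move=> r u v rr ar br uv.
  have rx : r != x by apply/eqP => E; move: rr; rewrite E (negbTE (children0_not_retic children_x)).
  have ry : r != y by apply/eqP => E; move: rr; rewrite E (negbTE (children0_not_retic children_y)).
  have rpy : r != py.
    by apply/eqP => E; move: rr; rewrite E (negbTE (children2_not_retic children_py neq_pxy)).
  case: (r =P px) => [Er|/eqP rpx].
    subst r; move: ar br uv; rewrite !(parents2E parents_px) tpx.
    case/orP => /eqP -> /orP [] /eqP -> uv; try by case: uv.
    + by rewrite tpy tq; split => // _ E; lra.
    + by rewrite tpy tq; split => [E|H]; [lra | case: H].
  have rN' : r \in nodes N' by rewrite nodes_reduce_retic_cherry rpx rpy !andbT; case/and3P: rr.
  have lift_arc w : (w, r) \in arcs N -> (w, r) \in arcs N' /\ t w = t' w.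
    move=> a; have [wpx wpy wx wy] := no_arc_from _ _ a rpx rpy rx ry.
    by rewrite arcs_reduce_retic_cherry a wpx wpy rpx rpy t_other.
  have [ar' ->] := lift_arc _ ar; have [br' ->] := lift_arc _ br.
  by rewrite t_other //; apply: Hret' ar' br' uv; rewrite (is_retic_preserved Hpd rN').
Qed.

End ReticulatedCherryReduction.

Section OrchardImpliesHGT.
Variable T : finType.
Implicit Types (N : digraph T) (x y : T).

Lemma reduce_other N x y : ~~ is_cherry N x y -> ~~ is_retic_cherry N x y ->
  reduce N (x, y) = N.
Proof.
move=> nc nr; rewrite /reduce; case: (parent N x) => [?|] //; case: (parent N y) => [?|] //.
by rewrite (negbTE nc) (negbTE nr).
Qed.

Lemma locally_binary_reduce N xy : locally_binary N -> locally_binary (reduce N xy).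
Proof.
case: xy => x y HLB; case: (boolP (is_cherry N x y)) => Hc.
  have [p [g Hconf]] := cherry_configP HLB Hc.
  exact: locally_binary_preserved (preserves_degrees_cherry HLB Hc Hconf) HLB.
case: (boolP (is_retic_cherry N x y)) => Hr; last by rewrite reduce_other.
have [px [py [q [g Hconf]]]] := retic_cherry_configP HLB Hr.
exact: locally_binary_preserved (preserves_degrees_retic_cherry HLB Hr Hconf) HLB.
Qed.

Lemma HGT_lift_reduce N xy t' : locally_binary N -> HGT_consistent (reduce N xy) t' ->
  exists t, HGT_consistent N t.
Proof.
case: xy => x y HLB Ht'; case: (boolP (is_cherry N x y)) => Hc.
  have [p [g Hconf]] := cherry_configP HLB Hc.
  exact: HGT_lift_cherry HLB Hc Hconf _ Ht'.
case: (boolP (is_retic_cherry N x y)) => Hr; last by move: Ht'; rewrite reduce_other //; exists t'.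
have [px [py [q [g Hconf]]]] := retic_cherry_configP HLB Hr.
exact: HGT_lift_retic_cherry HLB Hr Hconf _ Ht'.
Qed.

Lemma tree_HGT N : is_tree N -> exists t, HGT_consistent N t.
Proof.
case=> [[_ Hac _ Hkind] Hnr].
have lt_anc u v : (u, v) \in arcs N -> Rlt (INR #|ancestors N u|) (INR #|ancestors N v|).
  by move=> a; apply/lt_INR/ltP/card_ancestors_lt.
exists (fun z => INR #|ancestors N z|); split.
- by move=> u v /lt_anc lt; split => [|E]; [apply: Rlt_le | move: lt; rewrite E => /Rlt_irrefl].
- move=> u /andP [uN nlu]; suff /card_gt0P [v] : 0 < #|children N u|.
    by rewrite in_children => a; exists v; split => //; apply: lt_anc.
  rewrite -outdeg_children.
  case/or4P: (Hkind _ uN) =>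
    [/and3P [_ _ /eqP ->] | /and3P [_ _ /ltnW] | /and3P [_ _ /eqP ->] | lu] //.
  by rewrite lu in nlu.
- by move=> r u v rr; move: (Hnr r); rewrite rr.
Qed.

Lemma HGT_of_reduce_seq S N : locally_binary N -> is_tree (reduce_seq N S) ->
  exists t, HGT_consistent N t.
Proof.
elim: S N => [|xy S IH] N HLB; first exact: tree_HGT.
move=> /(IH _ (locally_binary_reduce xy HLB)) [t' Ht'].
exact: HGT_lift_reduce HLB Ht'.
Qed.

End OrchardImpliesHGT.

Section HGTImpliesOrchard.
Local Open Scope R_scope.
Variable T : finType.
Implicit Types (N : digraph T) (t : T -> R) (u v w x y z : T).

Lemma HGT_reduce_step N t x y : locally_binary N -> HGT_consistent N t ->
  is_cherry N x y \/ (is_retic_cherry N x y /\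
    forall w r, (w, y) \in arcs N -> (r, x) \in arcs N -> t w = t r) ->
  [/\ preserves_degrees N (reduce N (x, y)), (#|nodes (reduce N (x, y))| < #|nodes N|)%N
    & HGT_consistent (reduce N (x, y)) t].
Proof.
move=> HLB HH [Hc | [Hr Heq]].
  have [p [g Hconf]] := cherry_configP HLB Hc.
  have Hpd := preserves_degrees_cherry HLB Hc Hconf.
  split => //; last exact: HGT_reduce_cherry HLB Hc Hconf _ HH.
  apply: (nodes_preserved_lt Hpd (a := x)); first by case/and4P: Hc => /and3P [].
  by rewrite (nodes_reduce_cherry HLB Hc Hconf) eqxx andbF.
have [px [py [q [g Hconf]]]] := retic_cherry_configP HLB Hr.
have Hpd := preserves_degrees_retic_cherry HLB Hr Hconf.
have [[Px Py _ _] Ppx _ _ _] := Hconf.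
have arc_pypx : (py, px) \in arcs N by rewrite (parents2E Ppx) eqxx.
split => //.
  apply: (nodes_preserved_lt Hpd (a := px)); first exact: (arc_head HLB arc_pypx).
  by rewrite (nodes_reduce_retic_cherry HLB Hr Hconf) eqxx andbF.
apply: (HGT_reduce_retic_cherry HLB Hr Hconf HH).
by apply: Heq; rewrite ?(parents1E Px) ?(parents1E Py).
Qed.

Lemma HGT_tree_node_at_level N t u : locally_binary N -> HGT_consistent N t ->
  is_internal N u -> ~~ is_root N u ->
  exists w, [/\ is_internal N w, (indeg N w = 1)%N, (outdeg N w = 2)%N & t w = t u].
Proof.
move=> HLB HH iu nru; have /andP [uN nlu] := iu.
case/or4P: (HLB.2 _ uN) => /andP [/eqP iu' /eqP ou'].
- by move: nru; rewrite /is_root uN iu' ou'.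
- by exists u.
- have ru : is_retic N u by rewrite /is_retic uN iu' ou'.
  have [p [a tp]] := HGT_retic_parent HH HLB ru.
  have [i1 o2] := HGT_parent_eq_tree_node HH HLB a tp.
  exists p; split => //.
  by rewrite /is_internal (arc_tail HLB a) /is_leaf o2 /= !andbF.
- by move: nlu; rewrite /is_leaf uN iu' ou'.
Qed.

Lemma HGT_top_tree_node_reducible N t w : locally_binary N -> HGT_consistent N t ->
  is_internal N w -> (outdeg N w = 2)%N -> (forall v, is_internal N v -> t v <= t w) ->
  exists x y, is_cherry N x y \/ (is_retic_cherry N x y /\
    forall w' r, (w', y) \in arcs N -> (r, x) \in arcs N -> t w' = t r).
Proof.
move=> HLB HH iw ow2 wmax; have [Harc Hint _] := HH.
have above_leaf z : z \in nodes N -> t w < t z -> is_leaf N z.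
  move=> zN lt; apply/negPn/negP => nlz.
  by have := wmax z; rewrite /is_internal zN nlz => /(_ isT); lra.
have [y [wy lty]] := Hint _ iw.
have ly : is_leaf N y := above_leaf y (arc_head HLB wy) lty.
have [c [cy Cw]] : exists c, c != y /\ children N w = [set c; y].
  move: ow2; rewrite outdeg_children => /eqP /cards2P [c1 [c2 [c12 Cw]]].
  move: (wy); rewrite (children2E Cw) => /orP [] /eqP Ey; subst y.
    by exists c2; rewrite eq_sym setUC.
  by exists c1.
have wc : (w, c) \in arcs N by rewrite (children2E Cw) eqxx.
have cN : c \in nodes N := arc_head HLB wc.
case: (boolP (is_leaf N c)) => lc.
  exists c, y; left; rewrite /is_cherry lc ly cy /=.
  by apply/existsP; exists w; rewrite wc wy.
have tc : t w = t c.
  have := wmax c; rewrite /is_internal cN lc => /(_ isT).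
  by have := HGT_arc_le HH wc; lra.
have rc : is_retic N c by case: (Harc _ _ wc) => _ /(_ tc).
have [x [Cc ltx]] := HGT_retic_child HH rc.
have cx : (c, x) \in arcs N by rewrite (children1E Cc).
have lx : is_leaf N x := above_leaf x (arc_head HLB cx) (ltac:(lra)).
have Py : parents N y = [set w].
  by have [_ cy1 _] := leafE ly; apply: card1_set1 cy1 _; rewrite in_parents.
have Px : parents N x = [set c].
  by have [_ cx1 _] := leafE lx; apply: card1_set1 cx1 _; rewrite in_parents.
have xy : x != y.
  apply/eqP => E; move: cx; rewrite E (parents1E Py) => /eqP Ecw.
  by move: rc; rewrite /is_retic Ecw ow2 /= !andbF.
exists x, y; right; split.
  rewrite /is_retic_cherry lx ly xy /=; apply/existsP; exists c; rewrite cx rc /=.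
  by apply/existsP; exists w; rewrite wc wy.
by move=> w' r; rewrite (parents1E Py) (parents1E Px) => /eqP -> /eqP ->.
Qed.

Lemma HGT_root_on_top N t rho : locally_binary N -> HGT_consistent N t ->
  #|[set v | is_root N v]| = 1%N -> is_root N rho ->
  (forall u, is_internal N u -> t u <= t rho) -> is_tree N /\ nb_leaves N = 1%N.
Proof.
move=> HLB HH Hr1 rr rmax; have [_ Hint _] := HH; have /and3P [rN i0 o1] := rr.
have root_uniq z : is_root N z -> z = rho.
  move: Hr1 => /eqP /cards1P [r0 /setP E] rz.
  by move: (E z) (E rho); rewrite !inE rz rr => /esym/eqP -> /esym/eqP ->.
have ir : is_internal N rho by rewrite /is_internal rN /is_leaf (eqP i0) andbF.
have [c [a lt]] := Hint _ ir.
have Cr : children N rho = [set c].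
  by apply: card1_set1; [apply/eqP; rewrite -outdeg_children | rewrite in_children].
have cN : c \in nodes N := arc_head HLB a.
have lc : is_leaf N c.
  by apply/negPn/negP => nlc; have := rmax c; rewrite /is_internal cN nlc => /(_ isT); lra.
have [_ _ Cc] := leafE lc.
have Hnodes z : z \in nodes N -> (z == rho) || (z == c).
  move=> zN; apply/negPn/negP => zrc.
  pose S := [set z | [&& z \in nodes N, z != rho & z != c]].
  have /(acyclic_source (HGT_acyclic HH)) [s] : S != set0.
    by apply/set0Pn; exists z; rewrite inE zN -negb_or zrc.
  rewrite inE => /and3P [sN sr sc] ssrc.
  have : indeg N s != 0%N.
    by apply: contra sr => /eqP s0; apply/eqP/root_uniq/indeg0_root.
  rewrite indeg_parents -lt0n => /card_gt0P [u]; rewrite in_parents => us.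
  have := ssrc u us; rewrite inE (arc_tail HLB us) /=.
  case: (u =P rho) => [Eu|_]; first by move: us; rewrite Eu (children1E Cr) (negbTE sc).
  by case: (u =P c) => [Eu|//]; move: us; rewrite Eu (children0E Cc).
have nret v : ~~ is_retic N v.
  apply/negP => /and3P [vN i2 o1']; case/orP: (Hnodes _ vN) => /eqP Ev; subst v.
    by rewrite (eqP i0) in i2.
  by rewrite outdeg_children Cc cards0 in o1'.
split.
  split => //; split => //; first exact: HLB.1; first exact: HGT_acyclic HH.
  by move=> v /Hnodes /orP [] /eqP ->; rewrite ?rr ?lc ?orbT.
rewrite /nb_leaves; apply/eqP/cards1P; exists c; apply/setP => v; rewrite !inE.
apply/idP/idP => [lv|/eqP -> //].
case/and3P: (lv) => vN i1 _; case/orP: (Hnodes _ vN) => // /eqP Ev; subst v.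
by rewrite (eqP i0) in i1.
Qed.

Lemma orchard_of_HGT n N t : (#|nodes N| < n)%N -> locally_binary N ->
  HGT_consistent N t -> #|[set v | is_root N v]| = 1%N -> orchard N.
Proof.
elim: n N => [//|n IH] N Hn HLB HH Hr1.
have /set0Pn [rho] : [set v | is_root N v] != set0 by rewrite -card_gt0 Hr1.
rewrite inE => rr; have /and3P [rN i0 _] := rr.
have ir : is_internal N rho by rewrite /is_internal rN /is_leaf (eqP i0) andbF.
have rhoI : rho \in [set u | is_internal N u] by rewrite inE.
have [m] := exists_max_set t rhoI.
rewrite inE => im mmax.
have {}mmax u : is_internal N u -> t u <= t m by move=> iu; apply: mmax; rewrite inE.
case: (classic (exists u, [/\ is_internal N u, ~~ is_root N u & t u = t m])) => [|none].
  case=> u [iu nru tu]; have [w [iw _ ow2 tw]] := HGT_tree_node_at_level HLB HH iu nru.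
  have wmax v : is_internal N v -> t v <= t w by rewrite tw tu; apply: mmax.
  have [x [y Hxy]] := HGT_top_tree_node_reducible HLB HH iw ow2 wmax.
  have [Hpd Hlt HH'] := HGT_reduce_step HLB HH Hxy.
  have [|S HS] := IH _ (leq_trans Hlt Hn) (locally_binary_preserved Hpd HLB) HH'.
    by rewrite (roots_preserved Hpd).
  by exists ((x, y) :: S).
have rm : is_root N m by apply/negPn/negP => nrm; apply: none; exists m.
by exists [::]; apply: HGT_root_on_top HLB HH Hr1 rm mmax.
Qed.

End HGTImpliesOrchard.

Theorem mainTheorem5 (T : finType) (N : digraph T) :
  is_binary_network N ->
  (orchard N <-> exists t : T -> R, HGT_consistent N t).
Proof.
move=> Hb; have HLB := binary_locally_binary Hb; split.
  by case=> S [Ht _]; apply: HGT_of_reduce_seq Ht.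
case=> t HH; apply: (@orchard_of_HGT _ #|nodes N|.+1 N t) => //.
by case: Hb => [[_ _ Hr1 _] _].
Qed.
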